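(* Let $\rho_b<\rho_h$ with $\rho_b+\rho_h\le1$, and let $(\eta^0_x)_{x\in\mathbb{Z}}$ be i.i.d. with $\mathbb{P}(\eta^0_x=1)=\rho_b$, $\mathbb{P}(\eta^0_x=-1)=\rho_h$, $\mathbb{P}(\eta^0_x=0)=1-\rho_b-\rho_h$. Then almost surely there are infinitely many separators on the right of $0$ and infinitely many on the left of $0$.
   Context: A vertex $v\in\mathbb{Z}$ is a separator for $\eta^0$ if $\eta^0_v=-1$, $\sum_{j=k}^{v-1}\eta^0_j\le0$ for all $k<v$, and $\sum_{j=v+1}^{k}\eta^0_j\le0$ for all $k>v$. (State $1$ = ball, $-1$ = hole, $0$ = neutral.) *)

From HB Require Import structures.
From mathcomp Require Import all_boot all_order all_algebra.
From mathcomp Require Import all_classical all_reals all_analysis.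
Set Implicit Arguments. Unset Strict Implicit. Unset Printing Implicit Defensive.
Import Order.TTheory GRing.Theory Num.Theory.
Local Open Scope ring_scope.
Local Open Scope classical_set_scope.

(* A configuration on Z: value 1 = ball, -1 = hole, 0 = neutral. *)

Definition left_sum (c : int -> int) (k v : int) : int :=
  \sum_(i < `|v - k|%N) c (k + (i : nat)%:Z).

Definition right_sum (c : int -> int) (v k : int) : int :=
  \sum_(i < `|k - v|%N) c (v + 1 + (i : nat)%:Z).

Definition separator (c : int -> int) (v : int) : Prop :=
  c v = -1 /\
  (forall k : int, k < v -> left_sum c k v <= 0) /\
  (forall k : int, v < k -> right_sum c v k <= 0).

Definition mutually_independent {d} {T : measurableType d} {R : realType}
  (P : probability T R) (X : int -> T -> int) : Prop :=
  forall (s : seq int) (val : int -> int), uniq s ->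
    P (\big[setI/setT]_(x <- s) [set w | X x w = val x]) =
    (\prod_(x <- s) P [set w | X x w = val x])%E.

(* A site v is a separator when it holds a hole and the walks read from v
   outwards (to the left and to the right) never climb above 0.  Since
   b < h, each of these walks stays <= 0 forever with probability
   rho >= 1 - b/h > 0 (gambler's ruin), and the two sides of a hole are
   independent, so every site is a separator with probability at least
   p = h rho^2.  Being a separator is approximated by a test that only
   reads the D sites on each side; for sites more than 2D apart these tests
   are independent and their probability tends to p as D grows.  A second
   moment estimate over a window of K sites then shows that the probability
   of a window without separators tends to 0 as K grows, uniformly in the
   position of the window, so almost surely no half-line lacks separators. *)

From HB Require Import structures.
From mathcomp Require Import all_boot all_order all_algebra.
From mathcomp Require Import all_classical all_reals all_analysis.
From mathcomp Require Import measurable_realfun.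
From mathcomp Require Import zify ring lra.
Set Implicit Arguments. Unset Strict Implicit. Unset Printing Implicit Defensive.
Import Order.TTheory GRing.Theory Num.Theory.
Local Open Scope ring_scope.
Local Open Scope classical_set_scope.

Section word_law.
Variables (R : comNzRingType) (b h : R).

(* [word_prob m phi] is the probability that a word of m independent letters,
   each equal to 1, -1, 0 with probabilities b, h, 1 - b - h, satisfies phi. *)
Fixpoint word_prob (m : nat) (phi : pred (seq int)) : R :=
  if m is m'.+1 then
    b * word_prob m' (fun u => phi (1 :: u)) + h * word_prob m' (fun u => phi (-1 :: u))
    + (1 - b - h) * word_prob m' (fun u => phi (0 :: u))
  else (phi [::])%:R.

Lemma eq_word_prob m phi psi : phi =1 psi -> word_prob m phi = word_prob m psi.
Proof. by move=> /funext ->. Qed.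

Lemma word_prob_pred0 m : word_prob m pred0 = 0.
Proof. by elim: m => [|m IHm] //=; rewrite IHm; ring. Qed.

Lemma word_prob_andl m (a : bool) phi :
  word_prob m (fun u => a && phi u) = a%:R * word_prob m phi.
Proof. by case: a; rewrite ?mul1r // mul0r word_prob_pred0. Qed.

Definition word_cat m (phi psi : pred (seq int)) : pred (seq int) :=
  fun u => phi (take m u) && psi (drop m u).

Lemma word_prob_cat m1 m2 phi psi :
  word_prob (m1 + m2) (word_cat m1 phi psi) = word_prob m1 phi * word_prob m2 psi.
Proof.
elim: m1 phi => [|m1 IHm] phi /=.
  by rewrite -word_prob_andl; apply: eq_word_prob => u; rewrite /word_cat take0 drop0.
by rewrite !mulrDl -!mulrA -!IHm.
Qed.

Fixpoint walk_le0 (s : int) (u : seq int) : bool :=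
  if u is a :: u' then (s + a <= 0) && walk_le0 (s + a) u' else true.

Lemma word_prob_walk_le0S m s : word_prob m.+1 (walk_le0 s) =
  b * (s + 1 <= 0)%R%:R * word_prob m (walk_le0 (s + 1))
  + h * (s - 1 <= 0)%R%:R * word_prob m (walk_le0 (s - 1))
  + (1 - b - h) * (s <= 0)%R%:R * word_prob m (walk_le0 s).
Proof. by rewrite /= !word_prob_andl addr0 !mulrA. Qed.

Definition stay_prob (m : nat) : R := word_prob m (walk_le0 0).

(* A word read off [window v m] below lists the m letters left of v (nearest
   first), the letter at v, then the m letters right of v. *)
Definition sep_word (m : nat) : pred (seq int) :=
  word_cat m (walk_le0 0) (word_cat 1 (pred1 [:: -1]) (walk_le0 0)).

Lemma word_prob_sep_word m : word_prob (m + (1 + m)) (sep_word m) = h * stay_prob m ^+ 2.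
Proof. by rewrite !word_prob_cat /= /stay_prob; ring. Qed.

End word_law.

Section word_law_nonneg.
Variables (R : numDomainType) (b h : R).
Hypotheses (b_ge0 : 0 <= b) (h_ge0 : 0 <= h) (c_ge0 : 0 <= 1 - b - h).

Lemma word_prob_ge0 m phi : 0 <= word_prob b h m phi.
Proof.
elim: m phi => [|m IHm] phi /=; first by case: (phi [::]).
by rewrite !addr_ge0 // mulr_ge0.
Qed.

Lemma word_prob_le1 m phi : word_prob b h m phi <= 1.
Proof.
elim: m phi => [|m IHm] phi /=; first by case: (phi [::]).
rewrite -[leRHS](_ : b * 1 + h * 1 + (1 - b - h) * 1 = 1); last by ring.
by do 2?apply: lerD; apply: ler_wpM2l.
Qed.

End word_law_nonneg.

Section gambler_ruin.
Variables (R : realFieldType) (b h : R).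
Hypotheses (b_ge0 : 0 <= b) (h_gt0 : 0 < h) (c_ge0 : 0 <= 1 - b - h).

(* As a function of the starting height -n, [1 - (b/h)^(n+1)] is harmonic
   for the walk killed above 0. *)
Lemma word_prob_walk_le0_lb m n :
  1 - (b / h) ^+ n.+1 <= word_prob b h m (walk_le0 (- n%:Z)).
Proof.
set r := b / h; have br : b = h * r by rewrite /r mulrC divfK ?gt_eqF.
have h_ge0 := ltW h_gt0; have r_ge0 : 0 <= r by rewrite divr_ge0.
elim: m n => [|m IHm] n; first by rewrite /= lerBlDr lerDl exprn_ge0.
rewrite word_prob_walk_le0S; case: n => [|n].
  have [-> ->] : - 0%:Z + 1 = 1 /\ - 0%:Z - 1 = - 1%:Z by [].
  have -> : 1 - r ^+ 1 = h * (1 - r ^+ 2) + (1 - b - h) * (1 - r ^+ 1).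
    by rewrite br; ring.
  by rewrite mulr0 mul0r add0r !mulr1; apply: lerD; apply: ler_wpM2l.
have [-> ->] : - n.+1%:Z + 1 = - n%:Z /\ - n.+1%:Z - 1 = - n.+2%:Z by split; lia.
have [-> -> ->] : [/\ - n%:Z <= 0, - n.+2%:Z <= 0 & - n.+1%:Z <= 0] by split; lia.
have -> : 1 - r ^+ n.+2 =
    b * (1 - r ^+ n.+1) + h * (1 - r ^+ n.+3) + (1 - b - h) * (1 - r ^+ n.+2).
  by rewrite br !exprS; ring.
by rewrite !mulr1; do 2?apply: lerD; apply: ler_wpM2l.
Qed.

End gambler_ruin.

Lemma walk_le0_iota s (f : nat -> int) m :
  walk_le0 s [seq f i | i <- iota 0 m] <->
  (forall j, (j < m)%N -> s + \sum_(i < j.+1) f i <= 0).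
Proof.
elim: m s f => [|m IHm] s f /=; first by split.
rewrite -[iota 1 m]/(iota (1 + 0) m) iotaDl -map_comp.
split.
  case/andP=> s_le0 /IHm walk_le0 [|j] /= jm; first by rewrite big_ord1.
  by rewrite big_ord_recl addrA walk_le0.
move=> sums_le0; apply/andP; split; first by have := sums_le0 0%N isT; rewrite big_ord1.
by apply/IHm => j jm; have := sums_le0 j.+1 jm; rewrite big_ord_recl addrA.
Qed.

Lemma left_sumE (c : int -> int) v (j : nat) :
  left_sum c (v - j%:Z) v = \sum_(i < j) c (v - 1 - i%:Z).
Proof.
rewrite /left_sum (_ : absz (v - (v - j%:Z))%R = j); last by lia.
rewrite (reindex_inj rev_ord_inj); apply: eq_bigr => i _ /=.
by congr c; have := ltn_ord i; lia.
Qed.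

Lemma right_sumE (c : int -> int) v (j : nat) :
  right_sum c v (v + j%:Z) = \sum_(i < j) c (v + 1 + i%:Z).
Proof. by rewrite /right_sum (_ : absz (v + j%:Z - v)%R = j) //; lia. Qed.

Lemma separatorE (c : int -> int) v : separator c v <->
  [/\ c v = -1, forall j : nat, \sum_(i < j.+1) c (v - 1 - i%:Z) <= 0
              & forall j : nat, \sum_(i < j.+1) c (v + 1 + i%:Z) <= 0].
Proof.
split=> [[cv [left_le0 right_le0]] | [cv left_le0 right_le0]].
  split=> // j; first by rewrite -left_sumE left_le0 //; lia.
  by rewrite -right_sumE right_le0 //; lia.
split=> //; split=> k kv.
  by rewrite (_ : k = v - ((absz (v - k)%R).-1).+1%:Z) ?left_sumE //; lia.
by rewrite (_ : k = v + ((absz (k - v)%R).-1).+1%:Z) ?right_sumE //; lia.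
Qed.

Definition left_sites (v : int) (m : nat) : seq int :=
  [seq v - 1 - i%:Z | i <- iota 0 m].
Definition right_sites (v : int) (m : nat) : seq int :=
  [seq v + 1 + i%:Z | i <- iota 0 m].
Definition window (v : int) (m : nat) : seq int :=
  left_sites v m ++ v :: right_sites v m.

Lemma size_window v m : size (window v m) = (m + (1 + m))%N.
Proof. by rewrite size_cat /= !size_map size_iota. Qed.

Lemma mem_left_sites v m x : x \in left_sites v m -> v - m%:Z <= x < v.
Proof. by case/mapP=> i; rewrite mem_iota => /andP[_ im] ->; lia. Qed.

Lemma mem_right_sites v m x : x \in right_sites v m -> v < x <= v + m%:Z.
Proof. by case/mapP=> i; rewrite mem_iota => /andP[_ im] ->; lia. Qed.

Lemma mem_window v m x : x \in window v m -> v - m%:Z <= x <= v + m%:Z.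
Proof.
rewrite mem_cat inE => /orP[xl|/orP[/eqP-> | xr]].
- by have := mem_left_sites xl; lia.
- by lia.
- by have := mem_right_sites xr; lia.
Qed.

Lemma uniq_window v m : uniq (window v m).
Proof.
rewrite cat_uniq /= !map_inj_uniq ?iota_uniq; try by move=> i j; lia.
rewrite andbT negb_or /= -andbA; apply/and3P; split.
- by apply/negP => vl; have := mem_left_sites vl; lia.
- apply/hasPn => x xr; apply/negP => xl.
  by have := mem_left_sites xl; have := mem_right_sites xr; lia.
- by apply/negP => vr; have := mem_right_sites vr; lia.
Qed.

Lemma sep_wordE (c : int -> int) v m : sep_word m [seq c x | x <- window v m] <->
  [/\ c v = -1, forall j, (j < m)%N -> \sum_(i < j.+1) c (v - 1 - i%:Z) <= 0
              & forall j, (j < m)%N -> \sum_(i < j.+1) c (v + 1 + i%:Z) <= 0].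
Proof.
rewrite /sep_word /word_cat map_cat !(take_size_cat, drop_size_cat) ?size_map ?size_iota //=.
rewrite take0 drop0 /left_sites /right_sites -!map_comp.
split=> [/and3P[/walk_le0_iota left_le0 /eqP[cv] /walk_le0_iota right_le0]
        | [cv left_le0 right_le0]].
  split=> // j jm; [have := left_le0 j jm | have := right_le0 j jm]; by rewrite add0r.
apply/and3P; split.
- by apply/walk_le0_iota => j jm; rewrite add0r left_le0.
- by rewrite cv.
- by apply/walk_le0_iota => j jm; rewrite add0r right_le0.
Qed.

Lemma sum_ord_mem_interval (K l u : nat) :
  (\sum_(j < K) (l <= j <= u) = minn K u.+1 - l)%N.
Proof.
elim: K => [|K IHK]; first by rewrite big_ord0 min0n.
by rewrite big_ord_recr /= IHK; case: (leqP l K) => lK; case: (leqP K u) => Ku /=; lia.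
Qed.

Lemma subr_sqr_le (R : realDomainType) (a c : R) :
  0 <= a <= c -> c <= 1 -> c ^+ 2 - a ^+ 2 <= 2 * (c - a).
Proof. by move=> /andP[a_ge0 ac] c_le1; rewrite !expr2; nra. Qed.

Lemma second_moment_ratio_le (R : realFieldType) (al x S z eps : R) :
  0 < x <= al -> 0 <= eps ->
  al ^+ 2 * z <= S - al ^+ 2 -> S <= x ^+ 2 * (1 + eps) -> z <= eps.
Proof.
move=> /andP[x_gt0 x_le_al] eps_ge0 moment S_le.
have al_gt0 := lt_le_trans x_gt0 x_le_al.
have x2_le : x ^+ 2 <= al ^+ 2 by rewrite lerXn2r // ?nnegrE ltW.
rewrite -(ler_pM2l (exprn_gt0 2 al_gt0)); have := ler_wpM2r eps_ge0 x2_le; lra.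
Qed.

Section second_moment_method.
Context d (T : measurableType d) (R : realType) (P : probability T R).

Lemma integral_comb_indic (I : Type) (s : seq I) (c : I -> R) (A : I -> set T) :
  (forall i, 0 <= c i) -> (forall i, measurable (A i)) ->
  (\int[P]_w (\sum_(i <- s) (c i * \1_(A i) w)%:E) =
   (\sum_(i <- s) c i * fine (P (A i)))%:E)%E.
Proof.
move=> c_ge0 mA; rewrite ge0_integral_sum //; last 2 first.
- by move=> i; apply/measurable_EFinP; apply: measurable_funM.
- by move=> i w _; rewrite lee_fin mulr_ge0.
rewrite -sumEFin; apply: eq_bigr => i _.
rewrite (integralZl_indic _ (fun _ => A i)) //; last by rewrite ltNge c_ge0.
by rewrite integral_indic // setIT EFinM fineK ?fin_num_measure.
Qed.

Lemma le_comb_indic_measure (I J : Type) (s : seq I) (t : seq J)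
    (c : I -> R) (A : I -> set T) (e : J -> R) (B : J -> set T) :
  (forall i, 0 <= c i) -> (forall i, measurable (A i)) ->
  (forall j, 0 <= e j) -> (forall j, measurable (B j)) ->
  (forall w, \sum_(i <- s) c i * \1_(A i) w <= \sum_(j <- t) e j * \1_(B j) w) ->
  \sum_(i <- s) c i * fine (P (A i)) <= \sum_(j <- t) e j * fine (P (B j)).
Proof.
move=> c_ge0 mA e_ge0 mB le_comb.
rewrite -lee_fin -(integral_comb_indic s c_ge0 mA) -(integral_comb_indic t e_ge0 mB).
apply: ge0_le_integral => //.
- by move=> w _; apply: sume_ge0 => i _; rewrite lee_fin mulr_ge0.
- by apply: emeasurable_sum => i; apply/measurable_EFinP; apply: measurable_funM.
- by apply: emeasurable_sum => j; apply/measurable_EFinP; apply: measurable_funM.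
by move=> w _; rewrite !sumEFin lee_fin.
Qed.

Lemma second_moment (F : nat -> set T) (K : nat) : (forall i, measurable (F i)) ->
  (\sum_(i < K) fine (P (F i))) ^+ 2 * fine (P (~` \bigcup_(i in `I_K) F i))
  <= \sum_(i < K) \sum_(j < K) fine (P (F i `&` F j))
     - (\sum_(i < K) fine (P (F i))) ^+ 2.
Proof.
move=> mF; set al := \sum_(i < K) fine (P (F i)); set Z := ~` _.
have mZ : measurable Z by apply/measurableC/bigcup_measurable.
have al_ge0 : 0 <= al by apply: sumr_ge0 => i _; apply: fine_ge0; apply: measure_ge0.
pose c (o : option nat) := if o is Some _ then 2 * al else al ^+ 2.
pose A o := if o is Some i then F i else Z.
pose e (o : option (nat * nat)) := if o is Some _ then 1 else al ^+ 2.
pose B o := if o is Some ij then F ij.1 `&` F ij.2 else setT.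
have c_ge0 o : 0 <= c o by case: o => [i|]; rewrite ?mulr_ge0 ?exprn_ge0.
have e_ge0 o : 0 <= e o by case: o => [ij|]; rewrite ?exprn_ge0.
have mA o : measurable (A o) by case: o.
have mB o : measurable (B o) by case: o => [[i j]|] //=; apply: measurableI.
pose s := None :: [seq Some i | i <- index_iota 0 K].
pose t := None :: [seq Some ij | ij <- [seq (i, j) | i <- index_iota 0 K, j <- index_iota 0 K]].
(* With N the number of F i containing w: al^2 [w in Z] + 2 al N <= N^2 + al^2,
   as N = 0 on Z and (N - al)^2 >= 0. *)
have pointwise w : \sum_(o <- s) c o * \1_(A o) w <= \sum_(o <- t) e o * \1_(B o) w.
  rewrite !big_cons !big_map big_allpairs !big_mkord /= indicT mulr1 -mulr_sumr.
  set N := \sum_(i < K) \1_(F i) w.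
  have -> : \sum_(i < K) \sum_(0 <= j < K) 1 * \1_(F i `&` F j) w = N ^+ 2.
    rewrite expr2 mulr_suml; apply: eq_bigr => i _; rewrite big_mkord mulr_sumr.
    by apply: eq_bigr => j _; rewrite mul1r indicI.
  have [wZ|wZ] := boolP (w \in Z).
    have -> : N = 0.
      rewrite /N big1 // => i _; rewrite indicE.
      case: (boolP (w \in F i)) => // /set_mem Fiw.
      by move: wZ => /set_mem []; exists i => /=.
    by rewrite indicE wZ mulr1 mulr0 addr0 lerDl sqr_ge0.
  by rewrite indicE (negbTE wZ) mulr0 add0r; have := sqr_ge0 (N - al); nra.
have := le_comb_indic_measure c_ge0 mA e_ge0 mB pointwise.
rewrite !big_cons !big_map big_allpairs !big_mkord /= probability_setT mulr1.
have -> : \sum_(i < K) \sum_(0 <= j < K) 1 * fine (P (F i `&` F j)) =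
          \sum_(i < K) \sum_(j < K) fine (P (F i `&` F j)).
  by apply: eq_bigr => i _; rewrite big_mkord; apply: eq_bigr => j _; rewrite mul1r.
rewrite -mulr_sumr -/al; nra.
Qed.

End second_moment_method.

Section separators.
Context d (T : measurableType d) (R : realType) (P : probability T R).
Variables (eta0 : int -> T -> int) (b h : R).
Hypotheses (eta0_measurable : forall x v, measurable [set w | eta0 x w = v])
  (eta0_indep : mutually_independent P eta0)
  (eta0_ball : forall x, P [set w | eta0 x w = 1] = b%:E)
  (eta0_hole : forall x, P [set w | eta0 x w = -1] = h%:E)
  (eta0_neutral : forall x, P [set w | eta0 x w = 0] = (1 - b - h)%:E).

Definition word_event (s : seq int) (phi : pred (seq int)) : set T :=
  [set w | phi [seq eta0 x w | x <- s]].

Definition cylinder (t : seq int) (val : int -> int) : set T :=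
  \big[setI/setT]_(x <- t) [set w | eta0 x w = val x].

Lemma word_event_measurable s phi : measurable (word_event s phi).
Proof.
elim: s phi => [|x s IHs] phi.
  rewrite /word_event /=; case: (phi [::]).
    by rewrite (_ : [set _ | true] = setT) //; apply/seteqP; split.
  by rewrite (_ : [set _ | false] = set0) //; apply/seteqP; split.
rewrite (_ : word_event _ _ = \bigcup_(a : int)
  ([set w | eta0 x w = a] `&` word_event s (fun u => phi (a :: u)))).
  by apply: countable_bigcupT_measurable => // a; apply: measurableI.
by apply/seteqP; split=> [w phiw | w [a _ [/= <-]]] //; exists (eta0 x w).
Qed.

Lemma cylinder_measurable t val : measurable (cylinder t val).
Proof.
by elim: t => [|x t IHt]; rewrite /cylinder ?big_nil ?big_cons //; apply: measurableI.
Qed.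

#[local] Hint Resolve eta0_measurable word_event_measurable cylinder_measurable : core.

Lemma measure_split_site x A : measurable A ->
  P A = (P (A `&` [set w | eta0 x w = 1%R]) + P (A `&` [set w | eta0 x w = (-1)%R])
         + P (A `&` [set w | eta0 x w = 0%R]))%E.
Proof.
move=> mA; pose E a := [set w | eta0 x w = a].
have mE a : measurable (E a) by apply: eta0_measurable.
have disjE a a' : a != a' -> E a `&` E a' = set0.
  by move=> /eqP neq; apply/seteqP; split=> // w [/= ea ea']; apply: neq; rewrite -ea -ea'.
pose U := E 1 `|` E (-1) `|` E 0.
have mE1E2 : measurable (E 1 `|` E (-1)) by apply: measurableU.
have mU : measurable U by apply: measurableU.
have disjU : (E 1 `|` E (-1)) `&` E 0 = set0 by rewrite setIUl !disjE // setU0.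
(* The measure lemmas see [P] through another coercion, so [eta0_ball] and
   [PAU] apply to their output only up to conversion, hence the detours. *)
have PU : P U = 1%E.
  rewrite !measureU ?disjE //; transitivity ((b + h + (1 - b - h))%:E).
    by rewrite 2!EFinD -(eta0_ball x) -(eta0_hole x) -(eta0_neutral x).
  by congr (_%:E); ring.
have PAU : P (A `\` U) = 0%E.
  apply/eqP; rewrite eq_le measure_ge0 andbT.
  have : (P (A `\` U) <= P (~` U))%E.
    by rewrite le_measure ?inE //; [exact: measurableD | exact: measurableC].
  by rewrite probability_setC // PU subee.
rewrite (measureDI _ mA mU) [X in (X + _)%E](_ : _ = 0%E) ?add0e //.
rewrite /U !setIUr !measureU //; try by apply: measurableI.
- by rewrite setIACA setIid disjE ?setI0.
- by apply: measurableU; apply: measurableI.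
- by rewrite -setIUr setIACA setIid disjU setI0.
Qed.

Lemma measure_cylinder_cons x t val : uniq (x :: t) ->
  P (cylinder (x :: t) val) = (P [set w | eta0 x w = val x] * P (cylinder t val))%E.
Proof.
by move=> uxt; rewrite /cylinder !eta0_indep // ?big_cons //; case/andP: uxt.
Qed.

Lemma measure_cylinderI_word_event s t val phi : uniq (s ++ t) ->
  P (cylinder t val `&` word_event s phi) =
  (P (cylinder t val) * (word_prob b h (size s) phi)%:E)%E.
Proof.
elim: s t val phi => [|x s IHs] t val phi /=.
  move=> _; rewrite /word_event /=; case: (phi [::]).
    by rewrite (_ : [set _ | true] = setT) ?setIT ?mule1 //; apply/seteqP; split.
  by rewrite (_ : [set _ | false] = set0) ?setI0 ?measure0 ?mule0 //; apply/seteqP; split.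
rewrite mem_cat negb_or => /andP[/andP[xs xt] ust].
have ut : uniq t by move: ust; rewrite cat_uniq => /and3P[].
have uxt : uniq (x :: t) by rewrite /= xt ut.
have uxs : uniq (s ++ x :: t) by rewrite -cat1s uniq_catCA cat1s /= mem_cat negb_or xs xt.
(* Condition on the letter at x and move it into the cylinder. *)
pose val_a a y := if y == x then a else val y.
have cyl_a a : cylinder t (val_a a) = cylinder t val.
  apply: eq_big_seq => y yt; rewrite /val_a; case: eqP => // yx.
  by move: xt; rewrite -yx yt.
have slice a : cylinder t val `&` word_event (x :: s) phi `&` [set w | eta0 x w = a] =
    cylinder (x :: t) (val_a a) `&` word_event s (fun u => phi (a :: u)).
  rewrite /cylinder big_cons -/(cylinder t (val_a a)) cyl_a /val_a eqxx.
  apply/seteqP; split=> w /=.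
    by move=> [[cw phiw] xw]; split; [split|]; rewrite // /word_event /= -xw.
  by move=> [[xw cw] phiw]; split; [split|]; rewrite // /word_event /= xw.
rewrite (measure_split_site x); last exact: measurableI.
rewrite !slice !IHs // !measure_cylinder_cons // /val_a eqxx !cyl_a.
rewrite eta0_ball eta0_hole eta0_neutral.
rewrite -[P (cylinder t val)]fineK ?fin_num_measure //.
by rewrite -!EFinM -!EFinD /=; congr (_%:E); ring.
Qed.

Lemma measure_word_event s phi : uniq s ->
  P (word_event s phi) = (word_prob b h (size s) phi)%:E.
Proof.
move=> us; have := measure_cylinderI_word_event id phi (s := s) (t := [::]).
rewrite cats0 => /(_ us).
by rewrite /cylinder big_nil setTI probability_setT mul1e.
Qed.

Lemma word_eventI s1 s2 phi1 phi2 :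
  word_event s1 phi1 `&` word_event s2 phi2 =
  word_event (s1 ++ s2) (word_cat (size s1) phi1 phi2).
Proof.
apply/seteqP; split=> w; rewrite /word_event /word_cat /= map_cat.
  by rewrite take_size_cat ?drop_size_cat ?size_map // => -[-> ->].
by rewrite take_size_cat ?drop_size_cat ?size_map // => /andP.
Qed.

Definition sep_event (v : int) : set T := [set w | separator (eta0 ^~ w) v].

Definition sep_test (m : nat) (v : int) : set T := word_event (window v m) (sep_word m).

Lemma sep_test_measurable m v : measurable (sep_test m v).
Proof. exact: word_event_measurable. Qed.

#[local] Hint Resolve sep_test_measurable : core.

Lemma sep_eventE v : sep_event v = \bigcap_m sep_test m v.
Proof.
apply/seteqP; split=> w; rewrite /sep_event /sep_test /word_event /= separatorE.
  by move=> [cv left_le0 right_le0] m _; apply/sep_wordE.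
move=> tests; split; first by have /sep_wordE[] := tests 0%N I.
  by move=> j; have /sep_wordE[_ + _] := tests j.+1 I; apply.
by move=> j; have /sep_wordE[_ _] := tests j.+1 I; apply.
Qed.

Lemma sep_event_measurable v : measurable (sep_event v).
Proof. by rewrite sep_eventE; apply: bigcapT_measurable. Qed.

#[local] Hint Resolve sep_event_measurable : core.

Lemma sep_test_nonincr v : nonincreasing_seq (sep_test ^~ v).
Proof.
move=> m n mn; apply/subsetPset => w /sep_wordE[cv left_le0 right_le0].
by apply/sep_wordE; split=> // j jm; [apply: left_le0 | apply: right_le0];
  exact: leq_trans mn.
Qed.

Lemma measure_sep_test m v : P (sep_test m v) = (h * stay_prob b h m ^+ 2)%:E.
Proof. by rewrite measure_word_event ?uniq_window // size_window word_prob_sep_word. Qed.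

Lemma measure_sep_testI D v v' : v + 2 * D%:Z < v' ->
  P (sep_test D v `&` sep_test D v') = ((h * stay_prob b h D ^+ 2) ^+ 2)%:E.
Proof.
move=> vv'; rewrite word_eventI measure_word_event.
  by rewrite size_cat !size_window word_prob_cat !word_prob_sep_word expr2.
rewrite cat_uniq !uniq_window andbT /=; apply/hasPn => x xv'; apply/negP => xv.
by have := mem_window xv; have := mem_window xv'; lia.
Qed.

Hypothesis b_lt_h : b < h.

Let b_ge0 : 0 <= b.
Proof. by rewrite -lee_fin -(eta0_ball 0) measure_ge0. Qed.

Let c_ge0 : 0 <= 1 - b - h.
Proof. by rewrite -lee_fin -(eta0_neutral 0) measure_ge0. Qed.

Let h_gt0 : 0 < h. Proof. exact: le_lt_trans b_ge0 b_lt_h. Qed.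

Let h_le1 : h <= 1. Proof. by have := c_ge0; have := b_ge0; lra. Qed.

Lemma stay_prob_ge0 m : 0 <= stay_prob b h m.
Proof. exact: (word_prob_ge0 b_ge0 (ltW h_gt0) c_ge0). Qed.

Lemma stay_prob_le1 m : stay_prob b h m <= 1.
Proof. exact: (word_prob_le1 b_ge0 (ltW h_gt0) c_ge0). Qed.

Definition stay_prob_inf : R := inf (range (stay_prob b h)).

Lemma stay_prob_inf_le m : stay_prob_inf <= stay_prob b h m.
Proof. by apply: ge_inf; [exists 0 => _ [k _ <-]; apply: stay_prob_ge0 | exists m]. Qed.

Lemma stay_prob_inf_gt0 : 0 < stay_prob_inf.
Proof.
apply: lt_le_trans (_ : 0 < 1 - b / h) _; first by rewrite subr_gt0 ltr_pdivrMr // mul1r.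
apply: lb_le_inf; first by exists (stay_prob b h 0), 0%N.
move=> _ [m _ <-]; have := word_prob_walk_le0_lb b_ge0 h_gt0 c_ge0 m 0.
by rewrite expr1.
Qed.

(* Uses that [x |-> (h x^2)^2] is 4-Lipschitz on [0, 1]. *)
Lemma sep_pair_bound_close e : 0 < e ->
  exists D, (h * stay_prob b h D ^+ 2) ^+ 2 <= (h * stay_prob_inf ^+ 2) ^+ 2 + e.
Proof.
move=> e_gt0; set r := stay_prob_inf.
have [_ [D _ <-] D_lt] : exists2 y, range (stay_prob b h) y & y < r + e / 4.
  by apply: inf_lt; [exists (stay_prob b h 0), 0%N | rewrite ltrDl divr_gt0].
exists D; set y := stay_prob b h D in D_lt *.
have r_ge0 : 0 <= r := ltW stay_prob_inf_gt0.
have ry : r <= y := stay_prob_inf_le D.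
have y_le1 : y <= 1 := stay_prob_le1 D.
have r_le : 0 <= r <= y by rewrite r_ge0 ry.
have hr_le : 0 <= h * r ^+ 2 <= h * y ^+ 2.
  by rewrite mulr_ge0 ?exprn_ge0 ?(ltW h_gt0) //= ler_pM2l // lerXn2r ?nnegrE ?(le_trans r_ge0 ry).
have hy_le1 : h * y ^+ 2 <= 1.
  by rewrite mulr_ile1 ?exprn_ile1 ?exprn_ge0 ?(ltW h_gt0) ?(le_trans r_ge0 ry).
have sq_ge0 : 0 <= y ^+ 2 - r ^+ 2.
  by rewrite subr_ge0 -(ler_pM2l h_gt0); case/andP: hr_le.
have := subr_sqr_le hr_le hy_le1; have := subr_sqr_le r_le y_le1.
have := ler_wpM2r sq_ge0 h_le1; rewrite mul1r -mulrBr; lra.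
Qed.

Lemma measure_sep_event_ge v : ((h * stay_prob_inf ^+ 2)%:E <= P (sep_event v))%E.
Proof.
have tests_cvg : (P \o sep_test ^~ v) @ \oo --> P (\bigcap_m sep_test m v).
  apply: nonincreasing_cvg_mu => //; last exact: sep_test_nonincr.
    exact: le_lt_trans (probability_le1 P (sep_test_measurable _ _)) (ltry _).
  by apply: bigcapT_measurable.
rewrite sep_eventE -(cvg_lim _ tests_cvg) //; apply: lime_ge; first exact: cvgP tests_cvg.
apply: nearW => m /=; rewrite measure_sep_test lee_fin ler_pM2l //.
by rewrite lerXn2r ?nnegrE ?stay_prob_inf_le ?stay_prob_ge0 ?ltW ?stay_prob_inf_gt0.
Qed.

Lemma measure_sep_eventI_le D v v' : v + 2 * D%:Z < v' ->
  (P (sep_event v `&` sep_event v') <= ((h * stay_prob b h D ^+ 2) ^+ 2)%:E)%E.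
Proof.
move=> vv'; rewrite -(measure_sep_testI vv').
rewrite le_measure ?inE //; try exact: measurableI.
by apply: setISS; rewrite sep_eventE; apply: bigcap_inf.
Qed.

Lemma fine_measure_sep_eventI_le a D (i j : nat) :
  fine (P (sep_event (a + i%:Z) `&` sep_event (a + j%:Z))) <=
  (i - 2 * D <= j <= i + 2 * D)%N%:R + (h * stay_prob b h D ^+ 2) ^+ 2.
Proof.
have mGG : measurable (sep_event (a + i%:Z) `&` sep_event (a + j%:Z)) by apply: measurableI.
rewrite -lee_fin fineK ?fin_num_measure //.
have [near | far] := boolP (i - 2 * D <= j <= i + 2 * D)%N.
  rewrite EFinD; apply: le_trans (probability_le1 P mGG) (leeDl _ _).
  by rewrite lee_fin exprn_ge0 // mulr_ge0 ?exprn_ge0 ?stay_prob_ge0 ?ltW.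
rewrite add0r; have [ij | ji] : (i + 2 * D < j \/ j + 2 * D < i)%N by lia.
  by apply: measure_sep_eventI_le; lia.
by rewrite setIC; apply: measure_sep_eventI_le; lia.
Qed.

Lemma sum_measure_sep_eventI_le a K D :
  \sum_(i < K) \sum_(j < K) fine (P (sep_event (a + i%:Z) `&` sep_event (a + j%:Z))) <=
  K%:R * (4 * D + 1)%:R + K%:R ^+ 2 * (h * stay_prob b h D ^+ 2) ^+ 2.
Proof.
set q := (h * stay_prob b h D ^+ 2) ^+ 2.
apply: le_trans (_ : _ <= \sum_(i < K) ((4 * D + 1)%:R + K%:R * q)) _.
  apply: ler_sum => i _.
  apply: le_trans (_ : _ <= \sum_(j < K) ((i - 2 * D <= j <= i + 2 * D)%N%:R + q)) _.
    by apply: ler_sum => j _; apply: fine_measure_sep_eventI_le.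
  rewrite big_split /= sumr_const card_ord -[q *+ K]mulr_natl lerD2r -natr_sum ler_nat.
  by rewrite sum_ord_mem_interval; lia.
by rewrite sumr_const card_ord -[_ *+ K]mulr_natl mulrDr expr2 mulrA.
Qed.

Definition no_sep_in (a : int) (K : nat) : set T :=
  ~` \bigcup_(i in `I_K) sep_event (a + i%:Z).

Lemma no_sep_in_measurable a K : measurable (no_sep_in a K).
Proof. by apply/measurableC/bigcup_measurable. Qed.

Lemma no_sep_in_small eps : 0 < eps -> exists K, forall a, fine (P (no_sep_in a K)) <= eps.
Proof.
(* D makes far pairs of separators almost uncorrelated, then K makes the
   O(D K) near pairs negligible against (K p)^2. *)
move=> eps_gt0; set p := h * stay_prob_inf ^+ 2.
have p_gt0 : 0 < p by rewrite mulr_gt0 // exprn_gt0 // stay_prob_inf_gt0.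
have c_gt0 : 0 < p ^+ 2 * eps / 2 by rewrite divr_gt0 // mulr_gt0 // exprn_gt0.
have [D pair_le] := sep_pair_bound_close c_gt0.
set K := (Num.truncn ((4 * D + 1)%:R / (p ^+ 2 * eps / 2))).+1.
have D_le : (4 * D + 1)%:R <= K%:R * (p ^+ 2 * eps / 2).
  by rewrite -ler_pdivrMr // ltW // truncnS_gt.
exists K => a.
apply: (second_moment_ratio_le (x := K%:R * p)
  (al := \sum_(i < K) fine (P (sep_event (a + i%:Z))))) (ltW eps_gt0) _ _.
- rewrite mulr_gt0 ?ltr0Sn //= mulr_natl -[X in _ *+ X](card_ord K) -sumr_const.
  apply: ler_sum => i _; rewrite -lee_fin fineK ?fin_num_measure //.
  exact: measure_sep_event_ge.
- by apply: (@second_moment _ _ _ P (fun i : nat => sep_event (a + i%:Z))) => i.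
apply: le_trans (sum_measure_sep_eventI_le a K D) _.
have := ler_wpM2l (ler0n _ K) D_le.
have := ler_wpM2l (exprn_ge0 2 (ler0n _ K)) pair_le.
rewrite -/p; lra.
Qed.

Lemma no_sep_in_negligible (a : nat -> int) :
  P.-negligible (\bigcap_K no_sep_in (a K) K).
Proof.
have mZ : measurable (\bigcap_K no_sep_in (a K) K).
  by apply: bigcapT_measurable => K; apply: no_sep_in_measurable.
apply/negligibleP => //; apply/eqP; rewrite eq_le measure_ge0 andbT.
apply/lee_addgt0Pr => eps eps_gt0; rewrite add0e.
have [K small_K] := no_sep_in_small eps_gt0.
apply: (@le_trans _ _ (P (no_sep_in (a K) K))).
  by rewrite le_measure ?inE //; [exact: no_sep_in_measurable | exact: bigcap_inf].
by rewrite -[P _]fineK ?fin_num_measure ?lee_fin //; exact: no_sep_in_measurable.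
Qed.

End separators.

Unset Implicit Arguments.

Theorem mainTheorem17 (d : measure_display) (T : measurableType d)
  (R : realType) (P : probability T R) (eta0 : int -> T -> int)
  (rho_b rho_h : R) :
  rho_b < rho_h -> rho_b + rho_h <= 1 ->
  (forall (x v : int), measurable [set w | eta0 x w = v]) ->
  mutually_independent P eta0 ->
  (forall x : int, P [set w | eta0 x w = 1] = rho_b%:E) ->
  (forall x : int, P [set w | eta0 x w = -1] = rho_h%:E) ->
  (forall x : int, P [set w | eta0 x w = 0] = (1 - rho_b - rho_h)%:E) ->
  {ae P, forall w : T,
     (forall n : nat, exists v : int, n%:Z < v /\ separator (eta0 ^~ w) v) /\
     (forall n : nat, exists v : int, v < - n%:Z /\ separator (eta0 ^~ w) v)}.
Proof.
(* [rho_b + rho_h <= 1] also follows from the law of [eta0 0]. *)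
move=> b_lt_h _ meas indep ball hole neutral.
have no_sep_null := no_sep_in_negligible meas indep ball hole neutral b_lt_h.
apply: negligibleS (negligibleU
  (negligible_bigcup (fun n : nat => no_sep_null (fun _ => n%:Z + 1)))
  (negligible_bigcup (fun n : nat => no_sep_null (fun K => - n%:Z - K%:Z)))).
move=> w /= /not_andP[/existsNP[n no_right] | /existsNP[n no_left]]; [left | right];
  exists n => // K _ [i /= iK sep_i].
  by apply: no_right; exists (n%:Z + 1 + i%:Z); split => //; lia.
by apply: no_left; exists (- n%:Z - K%:Z + i%:Z); split => //; lia.
Qed.
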